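(* Let $p\ge 2$, $\alpha=p-1$, $0<R<\infty$, $\theta\ge\alpha$, $0\le\nu<\lambda_{\alpha,\theta}$. For each $\varepsilon\in(0,\mu_{\alpha,\theta})$ let $u_\varepsilon\in X^{1,p}_R(\alpha,\theta)\cap C^1[0,R]$ be nonnegative and nonincreasing with $H_\nu(u_\varepsilon)=1$ and $\int_0^R e^{\mu_\varepsilon u_\varepsilon^{p/(p-1)}}\mathrm d\lambda_\theta=S_\varepsilon(p,\nu,\theta,R)$, and let $\lambda_\varepsilon=\int_0^R e^{\mu_\varepsilon u_\varepsilon^{p/(p-1)}}u_\varepsilon^{p/(p-1)}\mathrm d\lambda_\theta$. Suppose that along a sequence $\varepsilon\to0$ we have $u_\varepsilon\to0$ in $L^q_\theta$ for every $q>1$ and $a_\varepsilon:=u_\varepsilon(0)\to+\infty$. Define $r_\varepsilon>0$ by $$r_\varepsilon^{\theta+1}=\frac{\lambda_\varepsilon}{a_\varepsilon^{\frac p{p-1}}e^{\mu_\varepsilon a_\varepsilon^{\frac p{p-1}}}}.$$ Then for every $\eta<\mu_{\alpha,\theta}$, $r_\varepsilon^{\theta+1}a_\varepsilon^{\frac p{p-1}}e^{\eta a_\varepsilon^{\frac p{p-1}}}\to0$ as $\varepsilon\to0$. In particular $r_\varepsilon^{\theta+1}\to0$.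
   Context: For $s\ge 0$ let $\omega_s=\frac{2\pi^{s/2}}{\Gamma(s/2)}$ and let $\mathrm d\lambda_s=\omega_s r^s\,\mathrm dr$ on $(0,R)$; $L^q_s=L^q((0,R),\mathrm d\lambda_s)$. The space $X^{1,p}_R(\alpha,\theta)$ is the completion of the set of all $u\in AC_{loc}(0,R)$ with $\lim_{r\to R}u(r)=0$, $u\in L^p_\theta$, $u'\in L^p_\alpha$, with respect to the norm $\|u\|=(\|u\|^p_{L^p_\theta}+\|u'\|^p_{L^p_\alpha})^{1/p}$. Set $\mu_{\alpha,\theta}=(\theta+1)\omega_\alpha^{1/\alpha}$, $\lambda_{\alpha,\theta}=\inf_{u\in X^{1,p}_R(\alpha,\theta)\setminus\{0\}}\|u'\|^p_{L^p_\alpha}/\|u\|^p_{L^p_\theta}$, and $H_\nu(u)=(\|u'\|^p_{L^p_\alpha}-\nu\|u\|^p_{L^p_\theta})^{1/p}$. Let $\mu_\varepsilon=\mu_{\alpha,\theta}-\varepsilon$ and $S_\varepsilon(p,\nu,\theta,R)=\sup_{u\in X^{1,p}_R(\alpha,\theta),\,H_\nu(u)\le1}\int_0^R e^{\mu_\varepsilon|u|^{p/(p-1)}}\mathrm d\lambda_\theta$. *)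

From HB Require Import structures.
From mathcomp Require Import all_boot all_order all_algebra.
From mathcomp Require Import all_classical all_reals all_analysis.
Set Implicit Arguments. Unset Strict Implicit. Unset Printing Implicit Defensive.
Import Order.TTheory GRing.Theory Num.Theory.
Import numFieldNormedType.Exports.
Local Open Scope classical_set_scope.
Local Open Scope ring_scope.

Section defs.
Variable R : realType.

Definition Gamma (x : R) : R :=
  fine (\int[@lebesgue_measure R]_(t in `]0%R, +oo[) (t `^ (x - 1) * expR (- t))%:E)%E.

Definition omega (s : R) : R := 2 * pi `^ (s / 2) / Gamma (s / 2).

(* integral of f over (0,Rr) against d lambda_s = omega_s r^s dr *)
Definition lam_int (s Rr : R) (f : R -> R) : \bar R :=
  (\int[@lebesgue_measure R]_(x in `]0%R, Rr[) (f x * (omega s * x `^ s))%:E)%E.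

Definition LpPow (s Rr q : R) (u : R -> R) : \bar R :=
  lam_int s Rr (fun x => `|u x| `^ q).

Definition abs_cont (u : R -> R) (a b : R) : Prop :=
  forall e : R, 0 < e -> exists2 d : R, 0 < d &
    forall (n : nat) (l r : nat -> R),
      (forall i, (i < n)%N -> a <= l i /\ l i < r i /\ r i <= b) ->
      (forall i j, (i < j < n)%N -> r i <= l j \/ r j <= l i) ->
      \sum_(i < n) (r i - l i) < d ->
      \sum_(i < n) `|u (r i) - u (l i)| < e.

Definition AC_loc (u : R -> R) (Rr : R) : Prop :=
  forall a b : R, 0 < a -> a < b -> b < Rr -> abs_cont u a b.

(* the generating set of X^{1,p}_R(alpha,theta); u' is taken as derive1 u
   (the a.e. derivative of an AC_loc function) *)
Definition in_X0 (p alpha theta Rr : R) (u : R -> R) : Prop :=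
  [/\ AC_loc u Rr,
      u x @[x --> Rr^'-] --> 0,
      (LpPow theta Rr p u < +oo)%E &
      (LpPow alpha Rr p (derive1 u) < +oo)%E].

Definition Hnu (p alpha theta Rr nu : R) (u : R -> R) : R :=
  (fine (LpPow alpha Rr p (derive1 u)) - nu * fine (LpPow theta Rr p u)) `^ (1 / p).

Definition lambda_at (p alpha theta Rr : R) : R :=
  inf [set fine (LpPow alpha Rr p (derive1 u)) / fine (LpPow theta Rr p u) | u in
        [set u | in_X0 p alpha theta Rr u /\
                 exists2 x, 0 < x < Rr & u x != 0]].

Definition mu_at (alpha theta : R) : R := (theta + 1) * omega alpha `^ (1 / alpha).

Definition S_eps (p nu theta Rr eps : R) : \bar R :=
  ereal_sup [set lam_int theta Rr
                   (fun x => expR ((mu_at (p - 1) theta - eps) * `|u x| `^ (p / (p - 1))))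
            | u in [set u | in_X0 p (p - 1) theta Rr u /\ Hnu p (p - 1) theta Rr nu u <= 1]].

Definition C1_on (u : R -> R) (a b : R) : Prop :=
  [/\ {within `[a, b], continuous u},
      (forall x, a < x < b -> derivable u x 1) &
      exists2 g : R -> R, {within `[a, b], continuous g} &
        forall x, a < x < b -> derive1 u x = g x].

End defs.

From HB Require Import structures.
From mathcomp Require Import all_boot all_order all_algebra.
From mathcomp Require Import all_classical all_reals all_analysis.
From mathcomp Require Import measurable_realfun.
From mathcomp Require Import ring lra.
Set Implicit Arguments.
Unset Strict Implicit.
Unset Printing Implicit Defensive.
Import Order.TTheory GRing.Theory Num.Theory.
Import numFieldNormedType.Exports.
Local Open Scope classical_set_scope.
Local Open Scope ring_scope.

(* Write [t = u^q] with [q = p/(p-1)] and [mu_eps = mu - eps]. Then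
   [r^(theta+1) a^q e^(eta a^q) = lam e^((eta - mu_eps) a^q)], and because [u <= a]
   this is at most [int e^(eta t) t dlambda_theta] as soon as [eta <= mu_eps]. Fix
   [N] with [e0 = mu - eps_N > eta]: every [u_n] competes in the supremum [S_eps]
   attained by [u_N], so the moments [int e^(e0 t)] are bounded uniformly in [n].
   Splitting [e^(eta t) t <= A t + delta e^(e0 t)] and using [int t -> 0] (the
   [L^q] convergence) makes [int e^(eta t) t] vanish. The second claim is the case
   [eta = 0], since eventually [a_n >= 1]. *)

(* Below [M] the factor [expR (eta * t)] is at most [expR (|eta| M)]; above [M],
   [t <= 2/d * expR (d t / 2)] spends half of the gap [d = e0 - eta] on the factor [t]. *)
Lemma expR_mul_le_split (R : realType) (eta e0 M t : R) :
  eta < e0 -> 0 <= M -> 0 <= t ->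
  expR (eta * t) * t <= expR (`|eta| * M) * t
    + 2 / (e0 - eta) * expR (- ((e0 - eta) * M / 2)) * expR (e0 * t).
Proof.
move=> lt_eta_e0 M0 t0; set d := e0 - eta.
have d0 : 0 < d by rewrite subr_gt0.
have [tM|Mt] := leP t M.
  rewrite -[leLHS]addr0; apply: lerD; last by rewrite !mulr_ge0 ?expR_ge0 ?invr_ge0 ?ltW.
  apply: ler_wpM2r => //; rewrite ler_expR (le_trans (ler_norm _)) //.
  by rewrite normrM (ger0_norm t0); apply: ler_wpM2l.
rewrite -[leLHS]add0r; apply: lerD; first by rewrite mulr_ge0 ?expR_ge0.
have t_le : t <= 2 / d * expR (d * t / 2).
  have d2 : 0 <= 2 / d by rewrite divr_ge0 ?ltW.
  apply: le_trans (ler_wpM2l d2 (expR_ge1Dx _)).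
  have -> : 2 / d * (1 + d * t / 2) = 2 / d + t by field; rewrite gt_eqF.
  by rewrite lerDr.
have -> : expR (eta * t) = expR (e0 * t) * expR (- (d * t)).
  by rewrite -expRD /d; congr expR; ring.
rewrite -mulrA [leRHS]mulrC; apply: ler_wpM2l; first exact: expR_ge0.
apply: le_trans (ler_wpM2l (expR_ge0 _) t_le) _.
rewrite mulrCA; apply: ler_wpM2l; first by rewrite divr_ge0 // ltW.
rewrite -expRD ler_expR.
have : d * M <= d * t by rewrite ler_wpM2l ?ltW.
lra.
Qed.

Lemma expR_mul_le_lin_exp (R : realType) (eta e0 eps : R) : eta < e0 -> 0 < eps ->
  exists2 A, 0 <= A &
    forall t, 0 <= t -> expR (eta * t) * t <= A * t + eps * expR (e0 * t).
Proof.
move=> lt_eta_e0 eps0; set d := e0 - eta.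
have d0 : 0 < d by rewrite subr_gt0.
set z := d * eps / 2; have z0 : 0 < z by rewrite divr_gt0 ?mulr_gt0.
set M := 2 / d * `|ln z|.
have M0 : 0 <= M by rewrite mulr_ge0 // divr_ge0 // ltW.
exists (expR (`|eta| * M)); first exact: expR_ge0.
move=> t t0; apply: le_trans (expR_mul_le_split lt_eta_e0 M0 t0) _.
rewrite lerD2l; apply: ler_wpM2r; first exact: expR_ge0.
have -> : d * M / 2 = `|ln z| by rewrite /M; field; rewrite gt_eqF.
have -> : eps = 2 / d * z by rewrite /z; field; rewrite gt_eqF.
apply: ler_wpM2l; first by rewrite divr_ge0 // ltW.
rewrite -[leRHS](lnK z0) ler_expR lerNl.
by rewrite -normrN ler_norm.
Qed.

Lemma cvge0_le {T : Type} {F : set_system T} {FF : Filter F} {R : realFieldType}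
    (f : T -> \bar R) :
  (forall e : R, 0 < e -> \forall x \near F, (0 <= f x <= e%:E)%E) -> f @ F --> 0%E.
Proof.
move=> small; apply/fine_cvgP; split.
  apply: filterS (small 1 ltr01) => x /andP[f0 f1].
  by rewrite ge0_fin_numE // (le_lt_trans f1) ?ltry.
apply/cvgrPdist_le => e e0; apply: filterS (small e e0) => x /andP[f0 fe] /=.
rewrite sub0r normrN ger0_norm ?fine_ge0 // -lee_fin fineK //.
by rewrite ge0_fin_numE // (le_lt_trans fe) ?ltry.
Qed.

Lemma measurable_expR_scale (R : realType) (k : R) :
  measurable_fun setT (fun s : R => expR (k * s)).
Proof. by apply: measurableT_comp => //; exact: measurable_funM. Qed.

Section weighted_exponential_moment.
Context d (T : measurableType d) (R : realType).
Variables (mu : {measure set T -> \bar R}) (D : set T) (w : T -> R).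
Hypotheses (mD : measurable D) (mw : measurable_fun D w).
Hypothesis w_ge0 : forall x, D x -> 0 <= w x.

Lemma measurable_fun_weighted (g : R -> R) (h : T -> R) :
  measurable_fun setT g -> measurable_fun D h ->
  measurable_fun D (fun x => (g (h x) * w x)%:E).
Proof.
move=> mg mh; apply/measurable_EFinP; apply: measurable_funM => //.
exact: measurableT_comp.
Qed.

Lemma integral_expR_mul_le (h : T -> R) (eta e0 A eps : R) :
  0 <= A -> 0 <= eps ->
  (forall t, 0 <= t -> expR (eta * t) * t <= A * t + eps * expR (e0 * t)) ->
  (forall x, D x -> 0 <= h x) -> measurable_fun D h ->
  (\int[mu]_(x in D) (expR (eta * h x) * h x * w x)%:E <=
     A%:E * \int[mu]_(x in D) (h x * w x)%:E
     + eps%:E * \int[mu]_(x in D) (expR (e0 * h x) * w x)%:E)%E.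
Proof.
move=> A0 eps0 pointwise h0 mh.
have m_hw := measurable_fun_weighted (@measurable_id _ _ setT) mh.
have m_ehw := measurable_fun_weighted (measurable_expR_scale e0) mh.
have m_lhs := measurable_fun_weighted
  (measurable_funM (measurable_expR_scale eta) (@measurable_id _ _ setT)) mh.
have hw_ge0 x : D x -> (0 <= (h x * w x)%:E)%E.
  by move=> Dx; rewrite lee_fin mulr_ge0 ?h0 ?w_ge0.
have ehw_ge0 x : D x -> (0 <= (expR (e0 * h x) * w x)%:E)%E.
  by move=> Dx; rewrite lee_fin mulr_ge0 ?expR_ge0 ?w_ge0.
rewrite -ge0_integralZl_EFin // -[X in (_ + X)%E]ge0_integralZl_EFin //.
rewrite -ge0_integralD //; last 4 first.
- by move=> x Dx; rewrite mule_ge0 ?hw_ge0.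
- exact: measurable_funeM.
- by move=> x Dx; rewrite mule_ge0 ?ehw_ge0.
- exact: measurable_funeM.
apply: ge0_le_integral => //.
- by move=> x Dx; rewrite lee_fin !mulr_ge0 ?expR_ge0 ?h0 ?w_ge0.
- by apply: emeasurable_funD; exact: measurable_funeM.
move=> x Dx; rewrite -!EFinM -EFinD lee_fin !mulrA -mulrDl.
by apply: ler_wpM2r; [exact: w_ge0|exact: pointwise (h0 _ Dx)].
Qed.

Lemma integral_expR_mul_cvg0 (h : nat -> T -> R) (eta e0 C : R) : eta < e0 ->
  (forall n x, D x -> 0 <= h n x) -> (forall n, measurable_fun D (h n)) ->
  (forall n, (\int[mu]_(x in D) (expR (e0 * h n x) * w x)%:E <= C%:E)%E) ->
  (\int[mu]_(x in D) (h n x * w x)%:E)%E @[n --> \oo] --> 0%E ->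
  (\int[mu]_(x in D) (expR (eta * h n x) * h n x * w x)%:E)%E @[n --> \oo] --> 0%E.
Proof.
move=> lt_eta_e0 h0 mh bnd moment0; apply: cvge0_le => e e_gt0.
set eps := e / (2 * (`|C| + 1)).
have eps0 : 0 < eps by rewrite divr_gt0 // mulr_gt0 // ltr_pwDr.
have [A A0 pointwise] := expR_mul_le_lin_exp lt_eta_e0 eps0.
move/fine_cvgP : moment0 => [moment_fin /cvgr_lt moment_small].
have A2 : 0 < 2 * (A + 1) by rewrite mulr_gt0 // ltr_pwDr.
have {}moment_small := moment_small _ (divr_gt0 e_gt0 A2); near=> n.
rewrite integral_ge0 /=; last by move=> x Dx; rewrite lee_fin !mulr_ge0 ?expR_ge0 ?h0 ?w_ge0.
apply: le_trans (integral_expR_mul_le A0 (ltW eps0) pointwise (h0 n) (mh n)) _.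
have fin : (\int[mu]_(x in D) (h n x * w x)%:E)%E \is a fin_num by near: n.
have L_le : ((fine (\int[mu]_(x in D) (h n x * w x)%:E))%:E <= (e / (2 * (A + 1)))%:E)%E.
  by rewrite lee_fin; apply: ltW; near: n.
have A0E : (0 <= A%:E)%E by rewrite lee_fin.
have eps0E : (0 <= eps%:E)%E by rewrite lee_fin ltW.
rewrite -(fineK fin).
apply: le_trans (leeD (lee_wpmul2l A0E L_le) (lee_wpmul2l eps0E (bnd n))) _.
rewrite -!EFinM -EFinD lee_fin.
have ratio_le1 (x : R) : 0 <= x -> x / (x + 1) <= 1.
  by move=> x0; rewrite ler_pdivrMr ?mul1r ?lerDl // ltr_pwDr.
have A_part : A * (e / (2 * (A + 1))) <= e / 2.
  have -> : A * (e / (2 * (A + 1))) = e / 2 * (A / (A + 1)).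
    by field; rewrite gt_eqF // ltr_pwDr.
  by rewrite ler_piMr ?ratio_le1 // divr_ge0 // ltW.
have C_part : eps * C <= e / 2.
  apply: le_trans (ler_wpM2l (ltW eps0) (ler_norm C)) _.
  have -> : eps * `|C| = e / 2 * (`|C| / (`|C| + 1)).
    by rewrite /eps; field; rewrite gt_eqF // ltr_pwDr.
  by rewrite ler_piMr ?ratio_le1 // divr_ge0 // ltW.
lra.
Unshelve. all: by end_near.
Qed.

Lemma integral_expR_rate_le (h : T -> R) (eta m H : R) : eta <= m ->
  (forall x, D x -> 0 <= h x <= H) -> measurable_fun D h ->
  ((expR ((eta - m) * H))%:E * \int[mu]_(x in D) (expR (m * h x) * h x * w x)%:E
    <= \int[mu]_(x in D) (expR (eta * h x) * h x * w x)%:E)%E.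
Proof.
move=> le_eta_m h_bnd mh.
have h0 x : D x -> 0 <= h x by case/h_bnd/andP.
have mexp k := measurable_fun_weighted
  (measurable_funM (measurable_expR_scale k) (@measurable_id _ _ setT)) mh.
have lhs_ge0 x : D x -> (0 <= (expR (m * h x) * h x * w x)%:E)%E.
  by move=> Dx; rewrite lee_fin !mulr_ge0 ?expR_ge0 ?h0 ?w_ge0.
rewrite -ge0_integralZl_EFin ?expR_ge0 //; last exact: mexp.
apply: ge0_le_integral => //.
- by move=> x Dx; rewrite mule_ge0 ?lhs_ge0 // lee_fin expR_ge0.
- exact: measurable_funeM (mexp m).
- exact: mexp.
move=> x Dx; have /andP[hx0 hxH] := h_bnd x Dx.
rewrite -EFinM lee_fin !mulrA; apply: ler_wpM2r; first exact: w_ge0.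
apply: ler_wpM2r => //; rewrite -expRD ler_expR.
have : 0 <= (m - eta) * (H - h x) by rewrite mulr_ge0 // subr_ge0.
nra.
Qed.

End weighted_exponential_moment.

Lemma omega_ge0 (R : realType) (s : R) : 0 <= omega s.
Proof.
rewrite /omega divr_ge0 ?mulr_ge0 ?powR_ge0 // fine_ge0 // integral_ge0 // => x _.
by rewrite lee_fin mulr_ge0 ?powR_ge0 ?expR_ge0.
Qed.

Lemma lam_weight_ge0 (R : realType) (s x : R) : 0 <= omega s * x `^ s.
Proof. by rewrite mulr_ge0 ?omega_ge0 ?powR_ge0. Qed.

Lemma measurable_lam_weight (R : realType) (s Rr : R) :
  measurable_fun `]0, Rr[ (fun x : R => omega s * x `^ s).
Proof.
apply: measurable_funM; first exact: measurable_cst.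
by apply: measurable_funTS; exact: measurable_powR.
Qed.

Lemma lam_int_ge0 (R : realType) (s Rr : R) (f : R -> R) :
  (forall x, 0 < x < Rr -> 0 <= f x) -> (0 <= lam_int s Rr f)%E.
Proof.
move=> f0; apply: integral_ge0 => x; rewrite /= in_itv /= => /f0 fx0.
by rewrite lee_fin mulr_ge0 ?lam_weight_ge0.
Qed.

Lemma lam_int_bounded_lt_pinfty (R : realType) (s Rr b : R) (f : R -> R) :
  0 <= s -> measurable_fun `]0, Rr[ f -> (forall x, 0 < x < Rr -> 0 <= f x <= b) ->
  (lam_int s Rr f < +oo)%E.
Proof.
move=> s0 mf f_bnd; set c := b * (omega s * Rr `^ s).
have le_cst : (lam_int s Rr f <= \int[lebesgue_measure]_(x in `]0%R, Rr[) c%:E)%E.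
  apply: ge0_le_integral => //.
  - move=> x; rewrite /= in_itv /= => /f_bnd/andP[fx0 _].
    by rewrite lee_fin mulr_ge0 ?lam_weight_ge0.
  - by apply/measurable_EFinP; apply: measurable_funM => //; exact: measurable_lam_weight.
  move=> x; rewrite /= in_itv /= => /[dup] /andP[x0 xRr] /f_bnd/andP[fx0 fxb].
  rewrite lee_fin /c; apply: ler_pM => //; first exact: lam_weight_ge0.
  apply: ler_wpM2l; first exact: omega_ge0.
  apply: (ge0_ler_powR s0) _ _ (ltW xRr); rewrite nnegrE ltW //.
  exact: lt_trans x0 xRr.
apply: le_lt_trans le_cst _.
rewrite integral_cst //= lebesgue_measure_itv /=.
by case: ifP => _; rewrite ?mule0 -?EFinM ?ltry.
Qed.

Lemma C1_on_measurable (R : realType) (v : R -> R) (a b : R) :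
  C1_on v a b -> measurable_fun `]a, b[ v.
Proof.
case=> cv _ _; apply: measurable_funS (subspace_continuous_measurable_fun _ cv) => //.
exact: subset_itv_oo_cc.
Qed.

Lemma lam_int_le_S_eps (R : realType) (p nu theta Rr eps : R) (v : R -> R) :
  in_X0 p (p - 1) theta Rr v -> Hnu p (p - 1) theta Rr nu v <= 1 ->
  (forall x, 0 < x < Rr -> 0 <= v x) ->
  (lam_int theta Rr (fun x => expR ((mu_at (p - 1) theta - eps) * v x `^ (p / (p - 1))))
     <= S_eps p nu theta Rr eps)%E.
Proof.
move=> vX0 vH v0; apply: ereal_sup_ubound; exists v; first by split.
rewrite /lam_int; apply: eq_integral => x; rewrite inE /= in_itv /= => /v0 vx0.
by rewrite ger0_norm.
Qed.

Lemma powR_ratio_expR_le (R : realType) (l T m eta k : R) : 0 <= l -> 0 <= T -> 0 < k ->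
  ((l / (T * expR (m * T))) `^ (1 / k)) `^ k * T * expR (eta * T)
    <= l * expR ((eta - m) * T).
Proof.
move=> l0 T0 k0.
rewrite -powRrM div1r mulVf ?gt_eqF // powRr1; last first.
  by rewrite divr_ge0 // mulr_ge0 ?expR_ge0.
have [->|T_neq0] := eqVneq T 0; first by rewrite mulr0 mul0r mulr_ge0 ?expR_ge0.
have -> : l / (T * expR (m * T)) * T * expR (eta * T) = l * (expR (eta * T) / expR (m * T)).
  by field; rewrite T_neq0 expR_eq0.
by rewrite mulrBl expRB.
Qed.

Section concentration.
Variables (R : realType) (p Rr theta nu : R) (eps : nat -> R) (u : nat -> R -> R).
Local Notation mu := (mu_at (p - 1) theta).
Local Notation q := (p / (p - 1)).
Local Notation lam n :=
  (fine (lam_int theta Rr (fun x => expR ((mu - eps n) * u n x `^ q) * u n x `^ q))).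
Local Notation a n := (u n 0).
Local Notation r n := ((lam n / (a n `^ q * expR ((mu - eps n) * a n `^ q))) `^ (1 / (theta + 1))).
Hypotheses (p_gt1 : 1 < p) (theta_ge0 : 0 <= theta).
Hypothesis eps_bnd : forall n, 0 < eps n < mu.
Hypothesis eps_cvg0 : eps n @[n --> \oo] --> 0.
Hypothesis u_X0 : forall n, in_X0 p (p - 1) theta Rr (u n).
Hypothesis u_C1 : forall n, C1_on (u n) 0 Rr.
Hypothesis u_ge0 : forall n x, 0 <= x <= Rr -> 0 <= u n x.
Hypothesis u_noninc : forall n x y, 0 <= x -> x <= y -> y <= Rr -> u n y <= u n x.
Hypothesis u_Hnu : forall n, Hnu p (p - 1) theta Rr nu (u n) = 1.
Hypothesis u_extremal : forall n,
  lam_int theta Rr (fun x => expR ((mu - eps n) * u n x `^ q)) = S_eps p nu theta Rr (eps n).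
Hypothesis u_Lq0 : LpPow theta Rr q (u n) @[n --> \oo] --> 0%E.

Let q_ge0 : 0 <= q.
Proof. by rewrite divr_ge0 ?subr_ge0 ?ltW // (lt_trans ltr01 p_gt1). Qed.

Lemma u_bounded n x : 0 < x < Rr -> 0 <= u n x <= a n.
Proof.
case/andP=> x0 xRr; have [x0' xRr'] := (ltW x0, ltW xRr).
by rewrite u_ge0 ?x0' //= u_noninc.
Qed.

Lemma upow_bounded n x : 0 < x < Rr -> 0 <= u n x `^ q <= a n `^ q.
Proof.
move=> /(u_bounded n)/andP[ux0 uxa]; rewrite powR_ge0 /=.
have ua0 := le_trans ux0 uxa.
by apply: (ge0_ler_powR q_ge0) _ _ uxa; rewrite nnegrE.
Qed.

Lemma measurable_upow n : measurable_fun `]0, Rr[ (fun x => u n x `^ q).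
Proof. exact: measurableT_comp (measurable_powR _) (C1_on_measurable (u_C1 n)). Qed.

Lemma exp_moment_bounded N : exists C, forall n,
  (lam_int theta Rr (fun x => expR ((mu - eps N) * u n x `^ q)) <= C%:E)%E.
Proof.
have mu_epsN : 0 <= mu - eps N by have /andP[_ /ltW] := eps_bnd N; rewrite subr_ge0.
have S_fin : S_eps p nu theta Rr (eps N) \is a fin_num.
  rewrite -u_extremal ge0_fin_numE; last by apply: lam_int_ge0 => x _; exact: expR_ge0.
  apply: (lam_int_bounded_lt_pinfty (b := expR ((mu - eps N) * a N `^ q))) => //.
    exact: measurableT_comp (measurable_expR_scale _) (measurable_upow N).
  move=> x /(upow_bounded N)/andP[_ uxa]; rewrite expR_ge0 ler_expR /=.
  exact: ler_wpM2l.
exists (fine (S_eps p nu theta Rr (eps N))) => n; rewrite fineK //.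
apply: lam_int_le_S_eps; first exact: u_X0.
  by rewrite u_Hnu.
by move=> x /(u_bounded n)/andP[].
Qed.

Lemma moment_cvg0 eta : eta < mu ->
  lam_int theta Rr (fun x => expR (eta * u n x `^ q) * u n x `^ q) @[n --> \oo] --> 0%E.
Proof.
move=> lt_eta_mu.
have [N _ /(_ N (leqnn N)) /= epsN] : \forall n \near \oo, eps n < mu - eta.
  by apply: cvgr_lt eps_cvg0 _ _; rewrite subr_gt0.
have [C C_bnd] := exp_moment_bounded N.
have LpE : (fun n => LpPow theta Rr q (u n)) = (fun n => lam_int theta Rr (fun x => u n x `^ q)).
  apply/funext => n; apply: eq_integral => x; rewrite inE /= in_itv /=.
  by move=> /(u_bounded n)/andP[ux0 _]; rewrite ger0_norm.
rewrite /lam_int in C_bnd *.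
apply: (@integral_expR_mul_cvg0 _ _ _ (@lebesgue_measure R) _ _ _
  (@measurable_lam_weight _ theta Rr) _ (fun n x => u n x `^ q) eta (mu - eps N) C).
- exact: measurable_itv.
- by move=> *; exact: lam_weight_ge0.
- by rewrite ltrBrDl addrC -ltrBrDl.
- by move=> *; exact: powR_ge0.
- exact: measurable_upow.
- exact: C_bnd.
- by move: u_Lq0; rewrite LpE.
Qed.

Lemma rescaled_mass_le eta : eta < mu -> \forall n \near \oo,
  r n `^ (theta + 1) * a n `^ q * expR (eta * a n `^ q)
    <= fine (lam_int theta Rr (fun x => expR (eta * u n x `^ q) * u n x `^ q)).
Proof.
move=> lt_eta_mu.
have [J_fin _] := (fine_cvgP _ _).1 (moment_cvg0 lt_eta_mu).
have eps_small : \forall n \near \oo, eps n < mu - eta.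
  by apply: cvgr_lt eps_cvg0 _ _; rewrite subr_gt0.
near=> n.
set T := a n `^ q; set m := mu - eps n.
set I := lam_int theta Rr (fun x => expR (m * u n x `^ q) * u n x `^ q).
have I_ge0 : (0 <= I)%E.
  by apply: lam_int_ge0 => x _; rewrite mulr_ge0 ?expR_ge0 ?powR_ge0.
have fineI_le : ((fine I)%:E <= I)%E by move: I_ge0; case: I.
have le_eta_m : eta <= m.
  have : eps n < mu - eta by near: n.
  rewrite /m; lra.
have upow_bnd x : (`]0, Rr[%classic : set R) x -> 0 <= u n x `^ q <= T.
  by rewrite /= in_itv /=; exact: upow_bounded.
have w_ge0 x : (`]0, Rr[%classic : set R) x -> 0 <= omega theta * x `^ theta.
  by move=> _; exact: lam_weight_ge0.
have := integral_expR_rate_le (@lebesgue_measure R) (measurable_itv _)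
  (@measurable_lam_weight _ theta Rr) w_ge0 le_eta_m upow_bnd (measurable_upow n).
rewrite -/(lam_int _ _ _) -/I => /(le_trans _) I_le.
apply: le_trans (powR_ratio_expR_le m eta (fine_ge0 I_ge0) (powR_ge0 _ _) _) _.
  by rewrite ltr_wpDl.
rewrite -lee_fin fineK; last by near: n.
rewrite mulrC EFinM; apply: I_le; apply: lee_wpmul2l => //.
Unshelve. all: by end_near.
Qed.

Lemma rescaled_mass_cvg0 eta : eta < mu ->
  r n `^ (theta + 1) * a n `^ q * expR (eta * a n `^ q) @[n --> \oo] --> 0.
Proof.
move=> lt_eta_mu; have [_ J_cvg0] := (fine_cvgP _ _).1 (moment_cvg0 lt_eta_mu).
apply: (squeeze_cvgr _ (cvg_cst 0) J_cvg0).
near=> n; rewrite !mulr_ge0 ?powR_ge0 ?expR_ge0 //=.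
by near: n; exact: rescaled_mass_le.
Unshelve. all: by end_near.
Qed.

Lemma radius_cvg0 : a n @[n --> \oo] --> +oo -> r n `^ (theta + 1) @[n --> \oo] --> 0.
Proof.
move=> a_cvgy.
have mu_gt0 : 0 < mu by have /andP[/lt_trans] := eps_bnd 0; apply.
apply: (squeeze_cvgr _ (cvg_cst 0) (rescaled_mass_cvg0 mu_gt0)).
have a_ge1 : \forall n \near \oo, 1 <= a n by exact: (cvgryPge _).1 a_cvgy 1.
near=> n; have an1 : 1 <= a n by near: n.
rewrite powR_ge0 mul0r expR0 mulr1 /= ler_peMr ?powR_ge0 //.
by have := ge0_ler_powR q_ge0 ler01 (le_trans ler01 an1) an1; rewrite powR1.
Unshelve. all: by end_near.
Qed.

End concentration.

Theorem lemma3p3 (R : realType) (p Rr theta nu : R) (eps : nat -> R)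
  (u : nat -> R -> R) :
  2 <= p -> 0 < Rr -> p - 1 <= theta -> 0 <= nu ->
  nu < lambda_at p (p - 1) theta Rr ->
  (forall n, 0 < eps n < mu_at (p - 1) theta) ->
  eps n @[n --> \oo] --> 0 ->
  (forall n, in_X0 p (p - 1) theta Rr (u n)) ->
  (forall n, C1_on (u n) 0 Rr) ->
  (forall n x, 0 <= x <= Rr -> 0 <= u n x) ->
  (forall n x y, 0 <= x -> x <= y -> y <= Rr -> u n y <= u n x) ->
  (forall n, Hnu p (p - 1) theta Rr nu (u n) = 1) ->
  (forall n, lam_int theta Rr
       (fun x => expR ((mu_at (p - 1) theta - eps n) * u n x `^ (p / (p - 1))))
     = S_eps p nu theta Rr (eps n)) ->
  (forall q : R, 1 < q -> (LpPow theta Rr q (u n) @[n --> \oo] --> 0%E)) ->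
  u n 0 @[n --> \oo] --> +oo ->
  let lam n := fine (lam_int theta Rr
       (fun x => expR ((mu_at (p - 1) theta - eps n) * u n x `^ (p / (p - 1)))
                 * u n x `^ (p / (p - 1)))) in
  let a n := u n 0 in
  let r n := (lam n / (a n `^ (p / (p - 1))
                 * expR ((mu_at (p - 1) theta - eps n) * a n `^ (p / (p - 1)))))
               `^ (1 / (theta + 1)) in
  (forall eta : R, eta < mu_at (p - 1) theta ->
     r n `^ (theta + 1) * a n `^ (p / (p - 1)) * expR (eta * a n `^ (p / (p - 1)))
       @[n --> \oo] --> 0) /\
  r n `^ (theta + 1) @[n --> \oo] --> 0.
Proof.
move=> p_ge2 _ theta_ge _ _ eps_bnd eps_cvg0 u_X0 u_C1 u_ge0 u_noninc u_Hnu u_extremal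
  u_Lq0 a_cvgy lam a r.
have p_gt1 : 1 < p by lra.
have theta_ge0 : 0 <= theta by lra.
have q_gt1 : 1 < p / (p - 1) by rewrite ltr_pdivlMr ?subr_gt0 // mul1r; lra.
have u_Lq := u_Lq0 _ q_gt1.
split; [exact: rescaled_mass_cvg0 | exact: radius_cvg0].
Qed.
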